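(* Let $k\in\{2,3\}$ and let $D$ be an $m$-colored semicomplete bipartite digraph such that every subdigraph of $D$ isomorphic to $\overrightarrow{C}_4\upuparrows\overrightarrow{C}_4$ is at most $k$-colored. Let $x,y$ be distinct vertices of $D$. If there exists a directed path from $x$ to $y$ using exactly $k$ colors and there is no directed path from $y$ to $x$ using at most $k$ colors, then $d(x,y)\leq 2$.
   Context: A semicomplete bipartite digraph is a digraph whose vertex set is partitioned into two nonempty independent sets such that for any two vertices $u,v$ in different parts at least one of the arcs $(u,v)$, $(v,u)$ is present (both may be present). An $m$-colored digraph is a digraph whose arcs are each assigned one of $m$ colors. A directed path (no repeated vertices) is $j$-colored if its arcs use exactly $j$ distinct colors; it uses at most $k$ colors if it is $j$-colored for some $1\le j\le k$. A subdigraph is at most $k$-colored if its arcs use at most $k$ colors. $\overrightarrow{C}_4\upuparrows\overrightarrow{C}_4$ denotes the digraph on five distinct vertices $a,b,c,d,e$ with arcs $a\to b$, $b\to c$, $c\to d$, $d\to a$, $c\to e$, $e\to a$, i.e. two directed $4$-cycles $(a,b,c,d,a)$ and $(a,b,c,e,a)$ sharing the directed path $a\to b\to c$. $d(x,y)$ denotes the minimum number of arcs of a directed path from $x$ to $y$. *)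

From mathcomp Require Import all_boot.
Set Implicit Arguments. Unset Strict Implicit. Unset Printing Implicit Defensive.

(* A digraph on a finite vertex type V is given by its arc relation A : rel V.
   An m-coloring assigns to every ordered pair a color in 'I_m; only the
   values on arcs are relevant. *)

Definition semicomplete_bipartite (V : finType) (A : rel V) (part : V -> bool) : Prop :=
  (exists u, part u) /\ (exists v, ~~ part v) /\
  (forall u v, A u v -> part u != part v) /\
  (forall u v, part u != part v -> A u v || A v u).

Definition dipath (V : finType) (A : rel V) (x y : V) (p : seq V) : Prop :=
  path A x p /\ uniq (x :: p) /\ last x p = y.

Definition path_colors (V : finType) (m : nat) (col : V -> V -> 'I_m)
    (x : V) (p : seq V) : seq 'I_m :=
  [seq col uv.1 uv.2 | uv <- zip (x :: p) p].

Definition ncolors (V : finType) (m : nat) (col : V -> V -> 'I_m)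
    (x : V) (p : seq V) : nat :=
  size (undup (path_colors col x p)).

Definition C4C4_at_most_colored (V : finType) (A : rel V) (m : nat)
    (col : V -> V -> 'I_m) (k : nat) : Prop :=
  forall a b c d e : V,
    uniq [:: a; b; c; d; e] ->
    A a b -> A b c -> A c d -> A d a -> A c e -> A e a ->
    size (undup [:: col a b; col b c; col c d; col d a; col c e; col e a]) <= k.

From mathcomp Require Import all_boot.

(* Suppose d(x,y) > 2.  Since neither x -> y nor y -> x is an arc
   (the latter would be a 1-colored return path), x and y lie in the same part.
   Follow a path x -> v_1 -> v_2 -> ... -> y: its vertices alternate between the
   two parts, and v_1 is an out-neighbour of x.  The first odd-indexed vertex i
   that is not an out-neighbour of x exists (otherwise the last vertex before y
   would give a 2-path x -> . -> y), and together with its two predecessors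
   o -> u -> i (A x o) it forms, with x and y, a copy of C4 ⇈ C4:
       o -> u -> i -> x -> o   and   o -> u -> i -> y -> o,
   the arcs i -> x, i -> y, y -> o being forced by semicompleteness and the
   absence of short paths.  The return path y -> o -> u -> i -> x then uses only
   colors of this copy, hence at most k colors: a contradiction. *)

Set Implicit Arguments.
Unset Strict Implicit.
Unset Printing Implicit Defensive.

Lemma size_undup_subset (T : eqType) (s t : seq T) :
  {subset s <= t} -> size (undup s) <= size (undup t).
Proof.
move=> st; apply: uniq_leq_size; first exact: undup_uniq.
by move=> a; rewrite !mem_undup; apply: st.
Qed.

Lemma ncolors_bounds (V : finType) (m : nat) (col : V -> V -> 'I_m)
    (x : V) (p : seq V) :
  0 < size p -> 1 <= ncolors col x p <= size p.
Proof.
case: p => [//|z p] _.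
have size_colors : size (path_colors col x (z :: p)) = size (z :: p).
  by rewrite size_map size2_zip.
have first_color : col x z \in undup (path_colors col x (z :: p)).
  by rewrite mem_undup mem_head.
rewrite /ncolors -size_colors size_undup andbT.
by case: (undup _) first_color.
Qed.

Lemma ncolors_short (V : finType) (m : nat) (col : V -> V -> 'I_m)
    (k : nat) (x : V) (p : seq V) :
  0 < size p <= k -> 1 <= ncolors col x p <= k.
Proof.
case/andP=> p_pos p_short.
by have /andP [-> /leq_trans ->] := ncolors_bounds col x p_pos.
Qed.

Section SemicompleteBipartite.

Variables (V : finType) (A : rel V) (part : V -> bool).
Hypothesis arc_across : forall u v, A u v -> part u != part v.
Hypothesis semicomplete : forall u v, part u != part v -> A u v || A v u.

Lemma arc_neq u v : A u v -> u != v.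
Proof. by move/arc_across; apply: contraNneq => ->; rewrite eqxx. Qed.

Lemma reverse_arc u v : part u != part v -> ~~ A u v -> A v u.
Proof. by move=> /semicomplete /orP [uv|//] /negP. Qed.

Lemma nonadjacent_same_part u v : ~~ A u v -> ~~ A v u -> part u = part v.
Proof.
move=> nuv nvu; apply/eqP; apply: contraT => /semicomplete.
by rewrite (negbTE nuv) (negbTE nvu).
Qed.

Lemma dipath1 x y : A x y -> dipath A x y [:: y].
Proof. by move=> xy; rewrite /dipath /= xy inE arc_neq. Qed.

Lemma dipath2 x z y : x != y -> A x z -> A z y -> dipath A x y [:: z; y].
Proof.
move=> xy xz zy.
by rewrite /dipath /= !inE !negb_or xz zy xy !arc_neq.
Qed.

Lemma stuck_configuration x y v q :
  part x = part y -> (forall z, A x z -> ~~ A z y) ->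
  A x v -> path A v q -> last v q = y ->
  exists o u i, [/\ A x o, A o u, A u i & ~~ A x i].
Proof.
move=> same_part no_2path.
have [n] := ubnP (size q); elim: n v q => // n IH v [|u [|i q]] /= size_q xv.
- by move=> _ vy; move: (arc_across xv); rewrite vy -same_part eqxx.
- by rewrite andbT => vu uy; move: (no_2path v xv); rewrite -uy vu.
case/and3P=> vu ui iq last_q; case: (boolP (A x i)) => [xi | nxi].
  by apply: (IH i q) => //; move: size_q; rewrite ltnS; apply: ltnW.
by exists v, u, i.
Qed.

Variables (m : nat) (col : V -> V -> 'I_m) (k : nat).
Hypothesis C4C4_colors : C4C4_at_most_colored A col k.

(* In a copy a -> b -> c -> d -> a, c -> e -> a of C4 ⇈ C4 the path
   e -> a -> b -> c -> d uses only colors of the copy, hence at most k. *)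
Lemma C4C4_return_path a b c d e :
  uniq [:: a; b; c; d; e] ->
  A a b -> A b c -> A c d -> A d a -> A c e -> A e a ->
  dipath A e d [:: a; b; c; d] /\ 1 <= ncolors col e [:: a; b; c; d] <= k.
Proof.
move=> abcde ab bc cd da ce ea; split.
  have eabcd : uniq (rot 4 [:: a; b; c; d; e]) by rewrite rot_uniq.
  by rewrite /dipath /= ea ab bc cd.
have /andP [-> _] := ncolors_bounds col e (isT : 0 < size [:: a; b; c; d]).
apply: leq_trans (C4C4_colors abcde ab bc cd da ce ea).
apply: size_undup_subset => z; rewrite !inE.
by case/or4P => ->; rewrite ?orbT.
Qed.

(* Short return paths are used directly; otherwise x, y lie
   in the same part and the stuck configuration o -> u -> i yields a copy
   of C4 ⇈ C4 on o, u, i, x, y. *)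
Lemma few_colored_return_path x y p :
  2 <= k -> x != y -> dipath A x y p -> ~~ A x y ->
  (forall z, A x z -> ~~ A z y) ->
  exists q, dipath A y x q /\ 1 <= ncolors col y q <= k.
Proof.
move=> k_ge2 xy [xp [_ last_p]] nxy no_2path.
case: (boolP (A y x)) => [yx | nyx].
  exists [:: x]; split; first exact: dipath1.
  by apply: ncolors_short; apply: leq_trans k_ge2.
case: (pickP (fun z => A y z && A z x)) => [z /andP [yz zx] | no_back2path].
  exists [:: z; x]; split; first by apply: dipath2; rewrite // eq_sym.
  exact: ncolors_short.
have same_part := nonadjacent_same_part nxy nyx.
case: p xp last_p => [_ /= xy_eq | v p /= /andP [xv vp] last_p].
  by rewrite xy_eq eqxx in xy.
have [o [u [i [xo ou ui nxi]]]] :=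
  stuck_configuration same_part no_2path xv vp last_p.
have part_xi : part x != part i.
  move: (arc_across xo) (arc_across ou) (arc_across ui).
  by case: (part x); case: (part o); case: (part u); case: (part i).
have ix : A i x := reverse_arc part_xi nxi.
have iy : A i y.
  apply: reverse_arc; first by rewrite -same_part.
  by apply: contraFN (no_back2path i) => yi; rewrite /= yi ix.
have yo : A y o.
  apply: reverse_arc (no_2path o xo).
  by rewrite -same_part eq_sym arc_across.
have ouixy : uniq [:: o; u; i; x; y].
  have oi : o != i by apply: contraNneq nxi => <-.
  have ux : u != x by apply: contraNneq nxi => <-.
  have uy : u != y by apply: contraNneq (no_2path o xo) => <-.
  by rewrite /= !inE !negb_or oi ux uy xy (eq_sym o x) (eq_sym o y) !arc_neq.
by exists [:: o; u; i; x]; apply: C4C4_return_path.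
Qed.

End SemicompleteBipartite.

Theorem mainTheorem5 (V : finType) (A : rel V) (part : V -> bool)
    (m : nat) (col : V -> V -> 'I_m) (k : nat) (x y : V) :
  (k == 2) || (k == 3) ->
  semicomplete_bipartite A part ->
  C4C4_at_most_colored A col k ->
  x != y ->
  (exists p, dipath A x y p /\ ncolors col x p = k) ->
  ~ (exists q, dipath A y x q /\ 1 <= ncolors col y q <= k) ->
  exists p, dipath A x y p /\ size p <= 2.
Proof.
move=> k23 [_ [_ [arc_across semicomplete]]] C4C4_colors xy [p [xpy _]].
move=> no_return.
have k_ge2 : 2 <= k by case/orP: k23 => /eqP ->.
case: (boolP (A x y)) => [x_y | nxy].
  by exists [:: y]; split; [exact: (dipath1 arc_across x_y) | ].
case: (pickP (fun z => A x z && A z y)) => [z /andP [xz zy] | no_2path].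
  by exists [:: z; y]; split; [exact: (dipath2 arc_across xy xz zy) | ].
exfalso; apply: no_return.
apply: (few_colored_return_path arc_across semicomplete C4C4_colors
  k_ge2 xy xpy nxy).
by move=> z xz; apply: contraFN (no_2path z) => zy; rewrite /= xz.
Qed.
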